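(* Let $d_h,d_b\ge1$ and $d=2d_h+d_b+2$. There exists a single-layer Transformer encoder (with linear maps $Q,K,V:\mathbb{Q}^d\to\mathbb{Q}^d$, an FFN $O$, residual connections, and final linear maps $K^{(1)},V^{(1)}$) such that for every $n\ge1$ and every $s_1,\dots,s_n\in\mathbb{Q}^{d_b}$, on input the sequence $x_i=[0_{d_h},s_i,0_{d_h},i,1]$, $i=1,\dots,n$, it outputs $(K^e,V^e)$ with $K^e=(k_1,\dots,k_n)$, $V^e=(v_1,\dots,v_n)$, where $k_i=[0_{d_h},0_{d_b},0_{d_h},-1,i]$ and $v_i=[0_{d_h},s_i,0_{d_h},0,0]$.
   Context: Vectors in $\mathbb{Q}^d$ are written as concatenations of blocks, $[\cdot,\cdot,\dots]$; $0_k$ is the zero vector of length $k$. A single-layer encoder with parameters $Q,K,V,O$ maps $(x_1,\dots,x_n)$ to $z_i=O(a_i)+a_i$ where $a_i=\mathrm{Att}(Q(x_i),K(X),V(X))+x_i$, and $\mathrm{Att}(q,K,V)=\sum_i\alpha_iv_i$ with $(\alpha_i)=\mathrm{hardmax}(f^{att}(q,k_1),\dots,f^{att}(q,k_n))$ ($\mathrm{hardmax}$ puts equal weight $1/r$ on the $r$ maximizing coordinates, $0$ elsewhere) for a scoring function $f^{att}$ (e.g. $-|\langle q,k\rangle|$). The FFN $O$ uses the saturated linear activation $\sigma(x)=\min(1,\max(0,x))$. The encoder outputs $K^e=K^{(1)}(Z)$, $V^e=V^{(1)}(Z)$ applied coordinatewise to $Z=(z_1,\dots,z_n)$. *)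

From HB Require Import structures.
From mathcomp Require Import all_boot all_order all_algebra.
Set Implicit Arguments. Unset Strict Implicit. Unset Printing Implicit Defensive.
Import Order.TTheory GRing.Theory Num.Theory.
Local Open Scope ring_scope.

(* d = 2 d_h + d_b + 2, written as the block sum dh + db + dh + 1 + 1 *)
Definition tdim (dh db : nat) : nat := (dh + db + dh + 1 + 1)%N.

Definition blk (dh db : nat) (a : 'rV[rat]_dh) (b : 'rV[rat]_db) (c : 'rV[rat]_dh)
  (e f : rat) : 'rV[rat]_(tdim dh db) :=
  row_mx (row_mx (row_mx (row_mx a b) c) (e%:M : 'rV[rat]_1)) (f%:M : 'rV[rat]_1).

Definition sigma (x : rat) : rat := Num.min 1 (Num.max 0 x).

Record ffn (d : nat) := FFN {
  ffn_m : nat;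
  ffn_W1 : 'M[rat]_(d, ffn_m);
  ffn_b1 : 'rV[rat]_ffn_m;
  ffn_W2 : 'M[rat]_(ffn_m, d);
  ffn_b2 : 'rV[rat]_d }.

Definition ffn_apply d (O : ffn d) (x : 'rV[rat]_d) : 'rV[rat]_d :=
  map_mx sigma (x *m ffn_W1 O + ffn_b1 O) *m ffn_W2 O + ffn_b2 O.

Definition fatt d (q k : 'rV[rat]_d) : rat := - `|(q *m k^T) 0 0|.

Definition hardmax n (f : 'I_n -> rat) (j : 'I_n) : rat :=
  let S := [set i | [forall k, f k <= f i]] in
  (j \in S)%:R / #|S|%:R.

Definition Att d n (q : 'rV[rat]_d) (Ks Vs : 'I_n -> 'rV[rat]_d) : 'rV[rat]_d :=
  \sum_(j < n) hardmax (fun i => fatt q (Ks i)) j *: Vs j.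

Record encoder (d : nat) := Encoder {
  enc_Q : 'M[rat]_d; enc_K : 'M[rat]_d; enc_V : 'M[rat]_d;
  enc_O : ffn d;
  enc_K1 : 'M[rat]_d; enc_V1 : 'M[rat]_d }.

Definition enc_a d (E : encoder d) n (X : 'I_n -> 'rV[rat]_d) (i : 'I_n) : 'rV[rat]_d :=
  Att (X i *m enc_Q E) (fun j => X j *m enc_K E) (fun j => X j *m enc_V E) + X i.

Definition enc_z d (E : encoder d) n (X : 'I_n -> 'rV[rat]_d) (i : 'I_n) : 'rV[rat]_d :=
  ffn_apply (enc_O E) (enc_a E X i) + enc_a E X i.

Definition enc_Ke d (E : encoder d) n (X : 'I_n -> 'rV[rat]_d) (i : 'I_n) :=
  enc_z E X i *m enc_K1 E.
Definition enc_Ve d (E : encoder d) n (X : 'I_n -> 'rV[rat]_d) (i : 'I_n) :=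
  enc_z E X i *m enc_V1 E.

From Pilot Require Import Defs.
From HB Require Import structures.
From mathcomp Require Import all_boot all_order all_algebra.
Import Order.TTheory GRing.Theory Num.Theory.
Local Open Scope ring_scope.

(* With the value map and the feed-forward network both zero, the residual
   connections make the encoder the identity, z_i = x_i.  Both outputs are
   then linear in x_i = [0, s_i, 0, i, 1]: the key swaps the last two
   coordinates (negating the constant 1) and the value keeps the s_i block. *)

Definition ffn0 d : ffn d := @FFN d 0 0 0 0 0.

Lemma ffn_apply0 d (x : 'rV[rat]_d) : ffn_apply (ffn0 d) x = 0.
Proof. by rewrite /ffn_apply /= [map_mx _ _]thinmx0 mul0mx addr0. Qed.

Lemma Att_eq0 d n (q : 'rV[rat]_d) (Ks Vs : 'I_n -> 'rV[rat]_d) :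
  (forall j, Vs j = 0) -> Att q Ks Vs = 0.
Proof. by move=> Vs0; rewrite /Att big1 // => j _; rewrite Vs0 scaler0. Qed.

Lemma enc_z_value0 d (Q K K1 V1 : 'M[rat]_d) n (X : 'I_n -> 'rV[rat]_d) i :
  enc_z (Encoder Q K 0 (ffn0 d) K1 V1) X i = X i.
Proof.
by rewrite /enc_z ffn_apply0 add0r /enc_a Att_eq0 ?add0r // => j; rewrite mulmx0.
Qed.

Section BlockVectors.

Variables dh db : nat.

Local Notation blk := (@blk dh db).
Local Notation d := (tdim dh db).

Lemma mul_blk_col m (a : 'rV_dh) (b : 'rV_db) (c : 'rV_dh) (e f : rat)
    (A : 'M_(dh, m)) (B : 'M_(db, m)) (C : 'M_(dh, m)) (u w : 'rV_m) :
  blk a b c e f *m col_mx (col_mx (col_mx (col_mx A B) C) u) w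
  = a *m A + b *m B + c *m C + e *: u + f *: w.
Proof. by rewrite /Defs.blk !mul_row_col !mul_scalar_mx. Qed.

Lemma blkD a b c e f a' b' c' e' f' :
  blk a b c e f + blk a' b' c' e' f'
  = blk (a + a') (b + b') (c + c') (e + e') (f + f').
Proof. by rewrite /Defs.blk !add_row_mx !raddfD. Qed.

Lemma blkZ k a b c e f :
  k *: blk a b c e f = blk (k *: a) (k *: b) (k *: c) (k * e) (k * f).
Proof. by rewrite /Defs.blk !scale_row_mx !scale_scalar_mx. Qed.

Definition key_mx : 'M[rat]_d :=
  col_mx (col_mx (col_mx (col_mx 0 0) 0) (blk 0 0 0 0 1)) (blk 0 0 0 (-1) 0).

Definition blk_mid_mx : 'M[rat]_(db, d) :=
  row_mx (row_mx (row_mx (row_mx 0 1%:M) 0) 0) 0.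

Definition value_mx : 'M[rat]_d :=
  col_mx (col_mx (col_mx (col_mx 0 blk_mid_mx) 0) 0) 0.

Lemma mul_blk_key a b c e f : blk a b c e f *m key_mx = blk 0 0 0 (- f) e.
Proof.
rewrite mul_blk_col !mulmx0 !add0r !blkZ blkD !scaler0 !addr0.
by rewrite !mulr0 mulr1 mulrN1 add0r addr0.
Qed.

Lemma mul_blk_mid b : b *m blk_mid_mx = blk 0 b 0 0 0.
Proof.
by rewrite /blk_mid_mx /Defs.blk !mul_mx_row !mulmx0 mulmx1 raddf0.
Qed.

Lemma mul_blk_value a b c e f : blk a b c e f *m value_mx = blk 0 b 0 0 0.
Proof.
by rewrite mul_blk_col !mulmx0 !scaler0 add0r !addr0 mul_blk_mid.
Qed.

End BlockVectors.

Theorem lemma1 (dh db : nat) (hdh : (0 < dh)%nat) (hdb : (0 < db)%nat) :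
  exists E : encoder (tdim dh db),
    forall (n : nat), (0 < n)%nat ->
    forall s : 'I_n -> 'rV[rat]_db,
    let X := fun i : 'I_n => blk (0 : 'rV_dh) (s i) (0 : 'rV_dh) (i.+1)%:R 1 in
    forall i : 'I_n,
      enc_Ke E X i = blk (0 : 'rV_dh) (0 : 'rV_db) (0 : 'rV_dh) (-1) (i.+1)%:R /\
      enc_Ve E X i = blk (0 : 'rV_dh) (s i) (0 : 'rV_dh) 0 0.
Proof.
exists (Encoder 0 0 0 (ffn0 _) (key_mx dh db) (value_mx dh db)) => n _ s X i.
by rewrite /enc_Ke /enc_Ve !enc_z_value0 /X mul_blk_key mul_blk_value.
Qed.
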